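(* Let $\mathbb C$ be a homological category with finite colimits, and let $x\colon X\to A$, $y\colon Y\to A$ be morphisms whose images are normal monomorphisms. Then there exists an internal multiplication $X\times Y\to A$ over $(A,1_A)$ if and only if there exists an internal pregroupoid structure on the span $A/X\leftarrow A\to A/Y$. Moreover, when such a multiplication $m$ and such a pregroupoid structure $p$ exist, they uniquely determine each other by $p\gamma_1=m$.
   Context: A homological category is a regular pointed category in which the Split Short Five Lemma holds; images are taken in the (regular epi, mono) factorization; a normal monomorphism is a kernel of some morphism. Notation: $\iota_i$ coproduct injections, $[a,b]$ copairing, $\langle\cdot\rangle$ pairing. $(A+X)\times_A(A+Y)$ is the pullback of $[1,0]\colon A+X\to A$ and $[1,0]\colon A+Y\to A$, with projections $\pi_1,\pi_2$. An internal multiplication $X\times Y\to A$ over $(A,1_A)$ is a morphism $m\colon (A+X)\times_A(A+Y)\to A$ with $m\langle 1,\iota_1[1,0]\rangle=[1,x]$ and $m\langle\iota_1[1,0],1\rangle=[1,y]$. $A_3=A\times_{A/X}A\times_{A/Y}A$ is the limit of $A\xrightarrow{\mathsf{coker}(x)}A/X\xleftarrow{\mathsf{coker}(x)}A\xrightarrow{\mathsf{coker}(y)}A/Y\xleftarrow{\mathsf{coker}(y)}A$, and $\gamma_1=\langle [1,x]\pi_1,[1,0]\pi_1,[1,y]\pi_2\rangle$. An internal pregroupoid structure on the span $A/X\leftarrow A\to A/Y$ is a morphism $p\colon A_3\to A$ with $p\langle\pi_1,\pi_2,\pi_2\rangle=\pi_1$ on $A\times_{A/X}A$ and $p\langle\pi_1,\pi_1,\pi_2\rangle=\pi_2$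 on $A\times_{A/Y}A$ ($\pi_1,\pi_2$ the kernel-pair projections). *)

(* All universal constructions are given as Props (universal
   properties); chosen objects/morphisms are passed as binders of the theorem. *)
Set Implicit Arguments.
Unset Strict Implicit.

Record Category := {
  ob :> Type;
  hom : ob -> ob -> Type;
  comp : forall x y z : ob, hom y z -> hom x y -> hom x z;
  idm : forall a : ob, hom a a;
  comp_assoc : forall a b c d (h : hom c d) (g : hom b c) (f : hom a b),
      comp h (comp g f) = comp (comp h g) f;
  comp_id_l : forall a b (f : hom a b), comp (idm b) f = f;
  comp_id_r : forall a b (f : hom a b), comp f (idm a) = f
}.
Arguments hom {_} _ _.
Arguments comp {_ x y z} _ _.
Arguments idm {_} a.

Notation "g ∘ f" := (comp g f) (at level 40, left associativity).

Section Defs.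
Context {C : Category}.

Definition is_initial (I : C) : Prop := forall a : C, exists! f : hom I a, True.
Definition is_terminal (T : C) : Prop := forall a : C, exists! f : hom a T, True.
Definition is_zero_object (Z : C) : Prop := is_initial Z /\ is_terminal Z.

Definition zero_mor {a b : C} (f : hom a b) : Prop :=
  exists (Z : C) (u : hom a Z) (v : hom Z b), is_zero_object Z /\ f = v ∘ u.

Definition mono {a b : C} (f : hom a b) : Prop :=
  forall (t : C) (g h : hom t a), f ∘ g = f ∘ h -> g = h.

Definition iso {a b : C} (f : hom a b) : Prop :=
  exists g : hom b a, g ∘ f = idm a /\ f ∘ g = idm b.

Definition is_pullback {a b c p : C} (f : hom a c) (g : hom b c)
    (p1 : hom p a) (p2 : hom p b) : Prop :=
  f ∘ p1 = g ∘ p2 /\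
  forall (t : C) (u : hom t a) (v : hom t b), f ∘ u = g ∘ v ->
    exists! w : hom t p, p1 ∘ w = u /\ p2 ∘ w = v.

Definition is_coequalizer {r a q : C} (f g : hom r a) (e : hom a q) : Prop :=
  e ∘ f = e ∘ g /\
  forall (t : C) (h : hom a t), h ∘ f = h ∘ g -> exists! w : hom q t, w ∘ e = h.

Definition is_coproduct {a b s : C} (i1 : hom a s) (i2 : hom b s) : Prop :=
  forall (t : C) (u : hom a t) (v : hom b t),
    exists! w : hom s t, w ∘ i1 = u /\ w ∘ i2 = v.

Definition is_kernel {k a b : C} (kk : hom k a) (f : hom a b) : Prop :=
  zero_mor (f ∘ kk) /\
  forall (t : C) (g : hom t a), zero_mor (f ∘ g) -> exists! h : hom t k, kk ∘ h = g.

Definition is_cokernel {x a q : C} (f : hom x a) (c : hom a q) : Prop :=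
  zero_mor (c ∘ f) /\
  forall (t : C) (g : hom a t), zero_mor (g ∘ f) -> exists! h : hom q t, h ∘ c = g.

Definition normal_mono {k a : C} (m : hom k a) : Prop :=
  exists (b : C) (f : hom a b), is_kernel m f.

Definition regular_epi {a q : C} (e : hom a q) : Prop :=
  exists (r : C) (f g : hom r a), is_coequalizer f g e.

Definition has_finite_limits : Prop :=
  (exists T : C, is_terminal T) /\
  forall (a b c : C) (f : hom a c) (g : hom b c),
    exists (p : C) (p1 : hom p a) (p2 : hom p b), is_pullback f g p1 p2.

Definition has_finite_colimits : Prop :=
  (exists I : C, is_initial I) /\
  (forall a b : C, exists (s : C) (i1 : hom a s) (i2 : hom b s), is_coproduct i1 i2) /\
  (forall (r a : C) (f g : hom r a), exists (q : C) (e : hom a q), is_coequalizer f g e).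

Definition pointed : Prop := exists Z : C, is_zero_object Z.

Definition regular : Prop :=
  has_finite_limits /\
  (forall (a c k : C) (f : hom a c) (k1 k2 : hom k a), is_pullback f f k1 k2 ->
     exists (q : C) (e : hom a q), is_coequalizer k1 k2 e) /\
  (forall (a b c p : C) (f : hom a c) (g : hom b c) (p1 : hom p a) (p2 : hom p b),
     regular_epi f -> is_pullback f g p1 p2 -> regular_epi p2).

Definition split_short_five : Prop :=
  forall (K A B K' A' B' : C)
    (k : hom K A) (p : hom A B) (s : hom B A)
    (k' : hom K' A') (p' : hom A' B') (s' : hom B' A')
    (u : hom K K') (v : hom A A') (w : hom B B'),
    is_kernel k p -> p ∘ s = idm B ->
    is_kernel k' p' -> p' ∘ s' = idm B' ->
    v ∘ k = k' ∘ u -> p' ∘ v = w ∘ p -> v ∘ s = s' ∘ w ->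
    iso u -> iso w -> iso v.

Definition homological : Prop := pointed /\ regular /\ split_short_five.

Definition image_is_normal {x a : C} (f : hom x a) : Prop :=
  exists (I : C) (e : hom x I) (m : hom I a),
    regular_epi e /\ mono m /\ f = m ∘ e /\ normal_mono m.

(* A3 = A x_{A/X} A x_{A/Y} A : limit of A -qx-> A/X <-qx- A -qy-> A/Y <-qy- A *)
Definition is_limit3 {a qx qy l : C} (cx : hom a qx) (cy : hom a qy)
    (e1 e2 e3 : hom l a) : Prop :=
  cx ∘ e1 = cx ∘ e2 /\ cy ∘ e2 = cy ∘ e3 /\
  forall (t : C) (u1 u2 u3 : hom t a), cx ∘ u1 = cx ∘ u2 -> cy ∘ u2 = cy ∘ u3 ->
    exists! w : hom t l, e1 ∘ w = u1 /\ e2 ∘ w = u2 /\ e3 ∘ w = u3.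

End Defs.

(* By protomodularity (the split short five lemma), a split extension is covered by
   its section together with its kernel: a mono through which both factor is an iso,
   and two maps agreeing on both are equal.  Viewing A3 as a split extension of
   A x_{A/Y} A, itself split over A, the kernels are the normal images of x and y;
   together with the diagonal they factor through gamma1 up to regular epis, so
   gamma1 is an extremal epi and hence, in a regular category, the coequalizer of its
   kernel pair.  The same covering argument, applied to that kernel pair split over
   the kernel pair of A+Y -> A x_{A/Y} A, shows that a multiplication m coequalizes
   it, so m = p gamma1 for a unique p.  Finally p is a pregroupoid structure exactly
   when p gamma1 is a multiplication, because the comparison maps
   A+X -> A x_{A/X} A and A+Y -> A x_{A/Y} A are epimorphisms, again by the covering
   argument. *)


Section CategoryFacts.
Context {C : Category}.

Definition epi {a b : C} (f : hom a b) : Prop :=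
  forall (t : C) (g h : hom b t), g ∘ f = h ∘ f -> g = h.

Definition factors_through {m a b : C} (n : hom m b) (g : hom a b) : Prop :=
  exists c : hom a m, n ∘ c = g.

Definition extremal_epi {a b : C} (g : hom a b) : Prop :=
  forall (m : C) (n : hom m b), mono n -> factors_through n g -> iso n.

Lemma zero_mor_unique {a b : C} (f g : hom a b) : zero_mor f -> zero_mor g -> f = g.
Proof.
  intros [Z [u [v [[HZi HZt] ->]]]] [Z' [u' [v' [[HZi' HZt'] ->]]]].
  destruct (HZi Z') as [t [_ Ht]].
  destruct (HZt' a) as [w [_ Hw]].
  destruct (HZi b) as [w' [_ Hw']].
  assert (Eu : u' = t ∘ u) by (rewrite <- (Hw u' I); apply Hw; auto).
  assert (Ev : v = v' ∘ t) by (rewrite <- (Hw' v I); apply Hw'; auto).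
  rewrite Eu, Ev, comp_assoc. reflexivity.
Qed.

Lemma zero_mor_postcomp {a b c : C} (f : hom a b) (h : hom b c) :
  zero_mor f -> zero_mor (h ∘ f).
Proof.
  intros [Z [u [v [HZ ->]]]]. exists Z, u, (h ∘ v). split; [exact HZ | apply comp_assoc].
Qed.

Lemma zero_mor_precomp {a b c : C} (f : hom b c) (h : hom a b) :
  zero_mor f -> zero_mor (f ∘ h).
Proof.
  intros [Z [u [v [HZ ->]]]]. exists Z, (u ∘ h), v.
  split; [exact HZ | symmetry; apply comp_assoc].
Qed.

Lemma zero_mor_exists (HP : pointed (C := C)) (a b : C) : exists z : hom a b, zero_mor z.
Proof.
  destruct HP as [Z [HZi HZt]].
  destruct (HZi b) as [v _], (HZt a) as [u _].
  exists (v ∘ u), Z, u, v. split; [split; assumption | reflexivity].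
Qed.

Lemma coequalizer_epi {r a q : C} (f g : hom r a) (e : hom a q) :
  is_coequalizer f g e -> epi e.
Proof.
  intros [He Hu] t h1 h2 Hh.
  destruct (Hu t (h1 ∘ e)) as [w [_ Hw]].
  { rewrite <- !comp_assoc, He. reflexivity. }
  rewrite <- (Hw h1 eq_refl), <- (Hw h2 (eq_sym Hh)). reflexivity.
Qed.

Lemma regular_epi_epi {a q : C} (e : hom a q) : regular_epi e -> epi e.
Proof. intros [r [f [g H]]]. exact (coequalizer_epi f g e H). Qed.

Lemma epi_comp {a b c : C} (f : hom a b) (g : hom b c) : epi f -> epi g -> epi (g ∘ f).
Proof. intros Hf Hg t h1 h2 H. apply Hg, Hf. rewrite <- !comp_assoc. exact H. Qed.

Lemma pullback_ext {a b c p t : C} {f : hom a c} {g : hom b c} {p1 : hom p a}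
  {p2 : hom p b} (H : is_pullback f g p1 p2) (u v : hom t p) :
  p1 ∘ u = p1 ∘ v -> p2 ∘ u = p2 ∘ v -> u = v.
Proof.
  intros H1 H2. destruct H as [Hc Hu].
  destruct (Hu t (p1 ∘ u) (p2 ∘ u)) as [w [_ Hw]].
  { rewrite !comp_assoc, Hc. reflexivity. }
  rewrite <- (Hw u (conj eq_refl eq_refl)), <- (Hw v (conj (eq_sym H1) (eq_sym H2))).
  reflexivity.
Qed.

Lemma kernel_pair_swap {a c p : C} {f : hom a c} {p1 p2 : hom p a} :
  is_pullback f f p1 p2 -> is_pullback f f p2 p1.
Proof.
  intros [Hc Hu]. split; [auto |]. intros t u v Huv.
  destruct (Hu t v u (eq_sym Huv)) as [w [[H1 H2] Hw]].
  exists w. split; [auto |]. intros w' [H1' H2']. apply Hw; auto.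
Qed.

Lemma pullback_mono {a b c p : C} {f : hom a c} {g : hom b c} {p1 : hom p a}
  {p2 : hom p b} : is_pullback f g p1 p2 -> mono f -> mono p2.
Proof.
  intros H Hf t u v Huv. apply (pullback_ext H); [| exact Huv].
  apply Hf. rewrite !comp_assoc, (proj1 H), <- !comp_assoc, Huv. reflexivity.
Qed.

Lemma factors_through_pullback {a b c p t : C} {n : hom a c} {d : hom b c}
  {n1 : hom p a} {n2 : hom p b} (H : is_pullback n d n1 n2) (g : hom t b) :
  factors_through n (d ∘ g) -> factors_through n2 g.
Proof.
  intros [c0 Hc0]. destruct (proj2 H t c0 g Hc0) as [w [[_ Hw] _]]. exists w; exact Hw.
Qed.

Lemma limit3_ext {a qx qy l t : C} {cx : hom a qx} {cy : hom a qy} {e1 e2 e3 : hom l a}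
  (H : is_limit3 cx cy e1 e2 e3) (u v : hom t l) :
  e1 ∘ u = e1 ∘ v -> e2 ∘ u = e2 ∘ v -> e3 ∘ u = e3 ∘ v -> u = v.
Proof.
  intros H1 H2 H3. destruct H as [Hc1 [Hc2 Hu]].
  destruct (Hu t (e1 ∘ u) (e2 ∘ u) (e3 ∘ u)) as [w [_ Hw]].
  { rewrite !comp_assoc, Hc1. reflexivity. }
  { rewrite !comp_assoc, Hc2. reflexivity. }
  rewrite <- (Hw u (conj eq_refl (conj eq_refl eq_refl))),
          <- (Hw v (conj (eq_sym H1) (conj (eq_sym H2) (eq_sym H3)))).
  reflexivity.
Qed.

Lemma coproduct_ext {a b s t : C} {i1 : hom a s} {i2 : hom b s}
  (H : is_coproduct i1 i2) (u v : hom s t) :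
  u ∘ i1 = v ∘ i1 -> u ∘ i2 = v ∘ i2 -> u = v.
Proof.
  intros H1 H2. destruct (H t (u ∘ i1) (u ∘ i2)) as [w [_ Hw]].
  rewrite <- (Hw u (conj eq_refl eq_refl)), <- (Hw v (conj (eq_sym H1) (eq_sym H2))).
  reflexivity.
Qed.

Lemma factors_through_of_regular_epi {a i m b : C} (e : hom a i) (n : hom m b)
  (j : hom i b) (c : hom a m) :
  regular_epi e -> mono n -> n ∘ c = j ∘ e -> factors_through n j.
Proof.
  intros [r [f [g He]]] Hn H. pose proof He as [Hc Hu].
  destruct (Hu m c) as [d [Hd _]].
  { apply Hn. rewrite !comp_assoc, H, <- !comp_assoc, Hc. reflexivity. }
  exists d. apply (coequalizer_epi f g e He). rewrite <- comp_assoc, Hd. exact H.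
Qed.

Lemma coimage_factor_mono (HR : regular (C := C)) {a b q k : C} (f : hom a b)
  (k1 k2 : hom k a) (Hk : is_pullback f f k1 k2) (e : hom a q)
  (He : is_coequalizer k1 k2 e) (n : hom q b) : n ∘ e = f -> mono n.
Proof.
  intros Hn t g h Hgh.
  destruct HR as [[_ HPB] [_ Hstab]].
  assert (Re : regular_epi e) by (exists k, k1, k2; exact He).
  destruct (HPB _ _ _ e g) as [W1 [al [be Hp1]]].
  destruct (HPB _ _ _ e (h ∘ be)) as [W2 [ga [de Hp2]]].
  pose proof (regular_epi_epi _ (Hstab _ _ _ _ _ _ _ _ Re Hp1)) as Eb.
  pose proof (regular_epi_epi _ (Hstab _ _ _ _ _ _ _ _ Re Hp2)) as Ed.
  destruct Hp1 as [c1 _], Hp2 as [c2 _].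
  assert (Hc : f ∘ (al ∘ de) = f ∘ ga).
  { rewrite <- Hn, <- !comp_assoc, (comp_assoc e al), c1, c2, <- !comp_assoc,
      (comp_assoc n g), Hgh. rewrite <- !comp_assoc. reflexivity. }
  destruct (proj2 Hk _ _ _ Hc) as [z [[Z1 Z2] _]].
  apply (epi_comp de be Ed Eb).
  rewrite comp_assoc, <- c1, <- comp_assoc, <- Z1, comp_assoc, (proj1 He),
    <- comp_assoc, Z2, c2, <- comp_assoc. reflexivity.
Qed.

Lemma coequalizer_iso_comp {r a q b : C} (k1 k2 : hom r a) (e : hom a q) (n : hom q b) :
  is_coequalizer k1 k2 e -> iso n -> is_coequalizer k1 k2 (n ∘ e).
Proof.
  intros [He Hu] [ni [Hl Hr]]. split.
  - rewrite <- !comp_assoc, He. reflexivity.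
  - intros t h Hh. destruct (Hu t h Hh) as [w [Hw Hwu]].
    exists (w ∘ ni). split.
    + rewrite <- comp_assoc, (comp_assoc ni), Hl, comp_id_l. exact Hw.
    + intros w' Hw'.
      assert (Wn : w' ∘ n = w) by (symmetry; apply Hwu; rewrite <- comp_assoc; exact Hw').
      rewrite <- Wn, <- comp_assoc, Hr, comp_id_r. reflexivity.
Qed.

Lemma extremal_epi_coequalizer (HR : regular (C := C)) {a b k : C} (g : hom a b)
  (k1 k2 : hom k a) : extremal_epi g -> is_pullback g g k1 k2 -> is_coequalizer k1 k2 g.
Proof.
  intros Hg Hk. pose proof HR as [_ [Hcoeq _]].
  destruct (Hcoeq _ _ _ g k1 k2 Hk) as [q [e He]].
  destruct (proj2 He b g (proj1 Hk)) as [n [Hn _]].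
  rewrite <- Hn. apply coequalizer_iso_comp; [exact He |].
  apply Hg; [exact (coimage_factor_mono HR g k1 k2 Hk e He n Hn) | exists e; exact Hn].
Qed.

End CategoryFacts.

Section Homological.
Context {C : Category} (HC : homological (C := C)).

Lemma kernel_exists {q b : C} (f : hom q b) : exists (k : C) (kk : hom k q), is_kernel kk f.
Proof.
  destruct HC as [[Z HZ] [[[_ HPB] _] _]]. pose proof HZ as [HZi HZt].
  destruct (HZi b) as [zB _].
  destruct (HPB _ _ _ f zB) as [K [ka [zk [Hc Hu]]]].
  exists K, ka. split.
  - exists Z, zk, zB. split; [exact HZ | exact Hc].
  - intros t g Hg. destruct (HZt t) as [tz [_ Htz]].
    assert (E : f ∘ g = zB ∘ tz).
    { apply zero_mor_unique; [exact Hg |]. exists Z, tz, zB. split; [exact HZ | reflexivity]. }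
    destruct (Hu t g tz E) as [w [[W1 W2] Hw]].
    exists w. split; [exact W1 |]. intros w' Hw'. apply Hw. split; [exact Hw' |].
    symmetry. apply Htz; auto.
Qed.

Lemma split_extension_cover_iso {q b m : C} (f : hom q b) (s : hom b q)
  (Hs : f ∘ s = idm b) (n : hom m q) (Hn : mono n) (Hsn : factors_through n s)
  (Hk : forall (t : C) (g : hom t q), zero_mor (f ∘ g) -> factors_through n g) : iso n.
Proof.
  destruct HC as [_ [_ HSSF]].
  destruct Hsn as [s' Hs'].
  destruct (kernel_exists f) as [K [k Kk]].
  destruct (Hk K k (proj1 Kk)) as [k' Hk'].
  assert (Kk' : is_kernel k' (f ∘ n)).
  { split.
    - rewrite <- comp_assoc, Hk'. exact (proj1 Kk).
    - intros t g Hg. destruct (proj2 Kk t (n ∘ g)) as [h [Hh Hhu]].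
      { rewrite comp_assoc. exact Hg. }
      exists h. split.
      + apply Hn. rewrite comp_assoc, Hk'. exact Hh.
      + intros h' Hh'. apply Hhu. rewrite <- Hk', <- comp_assoc, Hh'. reflexivity. }
  assert (Iid : forall a : C, iso (idm a)) by (intro a; exists (idm a); split; apply comp_id_l).
  apply (HSSF K m b K q b k' (f ∘ n) s' k f s (idm K) n (idm b)); auto.
  - rewrite <- comp_assoc, Hs'. exact Hs.
  - rewrite Hk', comp_id_r. reflexivity.
  - rewrite comp_id_l. reflexivity.
  - rewrite comp_id_r. exact Hs'.
Qed.

Lemma equalizer_exists {q d : C} (h1 h2 : hom q d) :
  exists (m : C) (n : hom m q), mono n /\ h1 ∘ n = h2 ∘ n /\
    forall (t : C) (g : hom t q), h1 ∘ g = h2 ∘ g -> factors_through n g.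
Proof.
  destruct HC as [_ [[[[T HT] HPB] _] _]].
  destruct (HT q) as [tq [_ Htq]], (HT d) as [td _].
  destruct (HPB _ _ _ tq td) as [R [p1 [p2 Hpr]]].
  assert (Graph : forall h : hom q d, exists a : hom q R, p1 ∘ a = idm q /\ p2 ∘ a = h).
  { intro h. destruct (proj2 Hpr q (idm q) h) as [a [Ha _]].
    - destruct (HT q) as [w [_ Hw]]. rewrite <- (Hw (tq ∘ idm q) I). apply Hw; auto.
    - exists a; exact Ha. }
  destruct (Graph h1) as [a1 [A11 A12]], (Graph h2) as [a2 [A21 A22]].
  destruct (HPB _ _ _ a1 a2) as [E [al [be Hpb]]].
  assert (Eab : al = be).
  { rewrite <- (comp_id_l al), <- A11, <- comp_assoc, (proj1 Hpb), comp_assoc, A21,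
      comp_id_l. reflexivity. }
  subst be.
  exists E, al. split; [| split].
  - intros t u v Huv. apply (pullback_ext Hpb); exact Huv.
  - rewrite <- A12, <- A22, <- !comp_assoc, (proj1 Hpb). reflexivity.
  - intros t g Hg.
    assert (E1 : a1 ∘ g = a2 ∘ g).
    { apply (pullback_ext Hpr); rewrite !comp_assoc.
      + rewrite A11, A21. reflexivity.
      + rewrite A12, A22. exact Hg. }
    destruct (proj2 Hpb t g g E1) as [c [[c1 _] _]]. exists c; exact c1.
Qed.

Lemma split_extension_jointly_epic {q b d : C} (f : hom q b) (s : hom b q)
  (Hs : f ∘ s = idm b) (h1 h2 : hom q d) (H1 : h1 ∘ s = h2 ∘ s)
  (H2 : forall (t : C) (g : hom t q), zero_mor (f ∘ g) -> h1 ∘ g = h2 ∘ g) : h1 = h2.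
Proof.
  destruct (equalizer_exists h1 h2) as [M [n [Hn [Heq Hu]]]].
  destruct (split_extension_cover_iso f s Hs n Hn (Hu _ s H1)) as [ni [_ Hni]].
  { intros t g Hg. apply Hu, H2, Hg. }
  rewrite <- (comp_id_r h1), <- (comp_id_r h2), <- Hni, !comp_assoc, Heq. reflexivity.
Qed.

Lemma limit3_cover_iso {a qx qy l m : C} {cx : hom a qx} {cy : hom a qy}
  {e1 e2 e3 : hom l a} (HL : is_limit3 cx cy e1 e2 e3) (n : hom m l) (Hn : mono n)
  (Hdiag : forall d : hom a l, e1 ∘ d = idm a -> e2 ∘ d = idm a -> e3 ∘ d = idm a ->
     factors_through n d)
  (Hker1 : forall (t : C) (g : hom t l), zero_mor (e2 ∘ g) -> zero_mor (e3 ∘ g) ->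
     factors_through n g)
  (Hker3 : forall (t : C) (g : hom t l), zero_mor (e1 ∘ g) -> zero_mor (e2 ∘ g) ->
     factors_through n g) :
  iso n.
Proof.
  pose proof HC as [_ [[[_ HPB] _] _]].
  destruct HL as [HL1 [HL2 HLu]].
  destruct (HPB _ _ _ cy cy) as [K [k1 [k2 HK]]].
  destruct (HLu K k1 k1 k2 eq_refl (proj1 HK)) as [dK [[dK1 [dK2 dK3]] _]].
  destruct (proj2 HK l e2 e3 HL2) as [pK [[pK1 pK2] _]].
  destruct (proj2 HK a (idm a) (idm a) eq_refl) as [delta [[delta1 delta2] _]].
  assert (HpK : pK ∘ dK = idm K).
  { apply (pullback_ext HK); rewrite comp_assoc, comp_id_r.
    - rewrite pK1. exact dK2.
    - rewrite pK2. exact dK3. }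
  (* [dK] factors through [n] because the pullback of [n] along it covers the
     split extension [k1] with section the diagonal [delta]. *)
  assert (HdK : factors_through n dK).
  { destruct (HPB _ _ _ n dK) as [N [n1 [n2 HN]]].
    destruct (split_extension_cover_iso k1 delta delta1 n2 (pullback_mono HN Hn))
      as [ni [_ Hni]].
    - apply (factors_through_pullback HN), Hdiag; rewrite comp_assoc.
      + rewrite dK1. exact delta1.
      + rewrite dK2. exact delta1.
      + rewrite dK3. exact delta2.
    - intros t g Hg. apply (factors_through_pullback HN), Hker3; rewrite comp_assoc.
      + rewrite dK1. exact Hg.
      + rewrite dK2. exact Hg.
    - exists (n1 ∘ ni).
      rewrite comp_assoc, (proj1 HN), <- comp_assoc, Hni, comp_id_r. reflexivity. }
  apply (split_extension_cover_iso pK dK HpK n Hn HdK).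
  intros t g Hg. apply Hker1.
  - rewrite <- pK1, <- comp_assoc. apply zero_mor_postcomp, Hg.
  - rewrite <- pK2, <- comp_assoc. apply zero_mor_postcomp, Hg.
Qed.

Lemma cokernel_zero_factors_image {x i a q : C} {f : hom x a} {m : hom i a}
  {e : hom x i} (Hf : f = m ∘ e) (Nm : normal_mono m) {c : hom a q}
  (Hc : is_cokernel f c) {t : C} (g : hom t a) :
  zero_mor (c ∘ g) -> factors_through m g.
Proof.
  intros Hg. destruct Nm as [b [h [Kz Ku]]].
  destruct (proj2 Hc b h) as [h' [Hh' _]].
  { rewrite Hf, comp_assoc. apply zero_mor_precomp, Kz. }
  destruct (Ku t g) as [c0 [Hc0 _]].
  { rewrite <- Hh', <- comp_assoc. apply zero_mor_postcomp, Hg. }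
  exists c0; exact Hc0.
Qed.

Lemma cokernel_image_zero {x i a q : C} {f : hom x a} {m : hom i a} {e : hom x i}
  (Ee : epi e) (Hf : f = m ∘ e) {c : hom a q} (Hc : is_cokernel f c) :
  zero_mor (c ∘ m).
Proof.
  destruct (zero_mor_exists (proj1 HC) i q) as [z Hz].
  replace (c ∘ m) with z; [exact Hz |].
  apply Ee. rewrite <- comp_assoc, <- Hf. apply zero_mor_unique.
  - apply zero_mor_precomp, Hz.
  - exact (proj1 Hc).
Qed.

Lemma kernel_pair_cokernel_epi {a q k x w : C} {c : hom a q} {ka kb : hom k a}
  (Hk : is_pullback c c ka kb) {f : hom x a} (Hf : image_is_normal f)
  (Hc : is_cokernel f c) (g : hom w k) (d : hom a w) (c1 : hom x w)
  (Hd1 : ka ∘ (g ∘ d) = idm a) (Hd2 : kb ∘ (g ∘ d) = idm a)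
  (Hc1 : ka ∘ (g ∘ c1) = f) (Hc2 : zero_mor (kb ∘ (g ∘ c1))) : epi g.
Proof.
  destruct Hf as [i [e [m [Re [_ [Hf Nm]]]]]].
  destruct (zero_mor_exists (proj1 HC) i a) as [z Hz].
  destruct (proj2 Hk i m z) as [j [[J1 J2] _]].
  { apply zero_mor_unique.
    - exact (cokernel_image_zero (regular_epi_epi e Re) Hf Hc).
    - apply zero_mor_postcomp, Hz. }
  (* [j = <m, 0>] covers the kernel of [kb] and is hit by [g] up to the regular epi [e] *)
  assert (Je : j ∘ e = g ∘ c1).
  { apply (pullback_ext Hk); rewrite !comp_assoc.
    - rewrite J1, <- Hf, <- comp_assoc, Hc1. reflexivity.
    - rewrite J2. apply zero_mor_unique; [apply zero_mor_precomp, Hz |].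
      rewrite <- comp_assoc. exact Hc2. }
  intros t h1 h2 Hh.
  apply (split_extension_jointly_epic kb (g ∘ d) Hd2).
  - rewrite !comp_assoc, Hh. reflexivity.
  - intros t' g' Hg'.
    destruct (cokernel_zero_factors_image Hf Nm Hc (ka ∘ g')) as [c0 Hc0].
    { rewrite comp_assoc, (proj1 Hk), <- comp_assoc. apply zero_mor_postcomp, Hg'. }
    assert (Gj : g' = j ∘ c0).
    { apply (pullback_ext Hk); rewrite comp_assoc.
      - rewrite J1, Hc0. reflexivity.
      - rewrite J2. apply zero_mor_unique; [exact Hg' | apply zero_mor_precomp, Hz]. }
    assert (Hj : h1 ∘ j = h2 ∘ j).
    { apply (regular_epi_epi e Re). rewrite <- !comp_assoc, Je, !comp_assoc, Hh.
      reflexivity. }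
    rewrite Gj, !comp_assoc, Hj. reflexivity.
Qed.

End Homological.

Section Correspondence.
Context {C : Category} (HC : homological (C := C))
  {A X Y : C} {x : hom X A} {y : hom Y A}
  (Hx : image_is_normal x) (Hy : image_is_normal y)
  {AX : C} {iX1 : hom A AX} {iX2 : hom X AX} (HAX : is_coproduct iX1 iX2)
  {AY : C} {iY1 : hom A AY} {iY2 : hom Y AY} (HAY : is_coproduct iY1 iY2)
  {rX : hom AX A} (HrX : rX ∘ iX1 = idm A /\ zero_mor (rX ∘ iX2))
  {rY : hom AY A} (HrY : rY ∘ iY1 = idm A /\ zero_mor (rY ∘ iY2))
  {sX : hom AX A} (HsX : sX ∘ iX1 = idm A /\ sX ∘ iX2 = x)
  {sY : hom AY A} (HsY : sY ∘ iY1 = idm A /\ sY ∘ iY2 = y)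
  {P : C} {pi1 : hom P AX} {pi2 : hom P AY} (HP : is_pullback rX rY pi1 pi2)
  {u1 : hom AX P} (Hu1 : pi1 ∘ u1 = idm AX /\ pi2 ∘ u1 = iY1 ∘ rX)
  {u2 : hom AY P} (Hu2 : pi1 ∘ u2 = iX1 ∘ rY /\ pi2 ∘ u2 = idm AY)
  {QX : C} {qX : hom A QX} (HqX : is_cokernel x qX)
  {QY : C} {qY : hom A QY} (HqY : is_cokernel y qY)
  {A3 : C} {e1 e2 e3 : hom A3 A} (HA3 : is_limit3 qX qY e1 e2 e3)
  {KX : C} {kX1 kX2 : hom KX A} (HKX : is_pullback qX qX kX1 kX2)
  {KY : C} {kY1 kY2 : hom KY A} (HKY : is_pullback qY qY kY1 kY2)
  {dX : hom KX A3} (HdX : e1 ∘ dX = kX1 /\ e2 ∘ dX = kX2 /\ e3 ∘ dX = kX2)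
  {dY : hom KY A3} (HdY : e1 ∘ dY = kY1 /\ e2 ∘ dY = kY1 /\ e3 ∘ dY = kY2)
  {g1 : hom P A3}
  (Hg1 : e1 ∘ g1 = sX ∘ pi1 /\ e2 ∘ g1 = rX ∘ pi1 /\ e3 ∘ g1 = sY ∘ pi2).

Definition internal_multiplication (m : hom P A) : Prop := m ∘ u1 = sX /\ m ∘ u2 = sY.

Definition pregroupoid_structure (p : hom A3 A) : Prop := p ∘ dX = kX1 /\ p ∘ dY = kY2.

Lemma gamma1_u1_factorization :
  exists gX : hom AX KX, epi gX /\ kX1 ∘ gX = sX /\ kX2 ∘ gX = rX /\ dX ∘ gX = g1 ∘ u1.
Proof.
  destruct HrX as [rX1 rX2], HsX as [sX1 sX2], Hu1 as [u11 u12], HsY as [sY1 _],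
    HdX as [dX1 [dX2 dX3]], Hg1 as [g11 [g12 g13]].
  assert (HqXs : qX ∘ sX = qX ∘ rX).
  { apply (coproduct_ext HAX); rewrite <- !comp_assoc.
    - rewrite sX1, rX1. reflexivity.
    - rewrite sX2. apply zero_mor_unique; [exact (proj1 HqX) | apply zero_mor_postcomp, rX2]. }
  destruct (proj2 HKX AX sX rX HqXs) as [gX [[G1 G2] _]].
  exists gX. split; [| split; [exact G1 | split; [exact G2 |]]].
  - apply (kernel_pair_cokernel_epi HC HKX Hx HqX gX iX1 iX2); rewrite comp_assoc.
    + rewrite G1. exact sX1.
    + rewrite G2. exact rX1.
    + rewrite G1. exact sX2.
    + rewrite G2. exact rX2.
  - apply (limit3_ext HA3); rewrite !comp_assoc.
    + rewrite dX1, g11, G1, <- comp_assoc, u11, comp_id_r. reflexivity.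
    + rewrite dX2, g12, G2, <- comp_assoc, u11, comp_id_r. reflexivity.
    + rewrite dX3, g13, G2, <- comp_assoc, u12, comp_assoc, sY1, comp_id_l. reflexivity.
Qed.

Lemma gamma1_u2_factorization :
  exists gY : hom AY KY, epi gY /\ kY1 ∘ gY = rY /\ kY2 ∘ gY = sY /\ dY ∘ gY = g1 ∘ u2.
Proof.
  destruct HrX as [rX1 _], HrY as [rY1 rY2], HsX as [sX1 _], HsY as [sY1 sY2],
    Hu2 as [u21 u22], HdY as [dY1 [dY2 dY3]], Hg1 as [g11 [g12 g13]].
  assert (HqYs : qY ∘ rY = qY ∘ sY).
  { apply (coproduct_ext HAY); rewrite <- !comp_assoc.
    - rewrite sY1, rY1. reflexivity.
    - rewrite sY2. apply zero_mor_unique; [apply zero_mor_postcomp, rY2 | exact (proj1 HqY)]. }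
  destruct (proj2 HKY AY rY sY HqYs) as [gY [[G1 G2] _]].
  exists gY. split; [| split; [exact G1 | split; [exact G2 |]]].
  - apply (kernel_pair_cokernel_epi HC (kernel_pair_swap HKY) Hy HqY gY iY1 iY2);
      rewrite comp_assoc.
    + rewrite G2. exact sY1.
    + rewrite G1. exact rY1.
    + rewrite G2. exact sY2.
    + rewrite G1. exact rY2.
  - apply (limit3_ext HA3); rewrite !comp_assoc.
    + rewrite dY1, g11, G1, <- comp_assoc, u21, comp_assoc, sX1, comp_id_l. reflexivity.
    + rewrite dY2, g12, G1, <- comp_assoc, u21, comp_assoc, rX1, comp_id_l. reflexivity.
    + rewrite dY3, g13, G2, <- comp_assoc, u22, comp_id_r. reflexivity.
Qed.

Lemma pregroupoid_iff_multiplication (p : hom A3 A) :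
  pregroupoid_structure p <-> internal_multiplication (p ∘ g1).
Proof.
  destruct gamma1_u1_factorization as [gX [EX [GX1 [_ DX]]]].
  destruct gamma1_u2_factorization as [gY [EY [_ [GY2 DY]]]].
  unfold pregroupoid_structure, internal_multiplication.
  rewrite <- !comp_assoc, <- DX, <- DY, !comp_assoc, <- GX1, <- GY2.
  split; intros [H1 H2]; split.
  - rewrite H1. reflexivity.
  - rewrite H2. reflexivity.
  - exact (EX A _ _ H1).
  - exact (EY A _ _ H2).
Qed.

Lemma gamma1_covers_kernel_X {M : C} (n : hom M A3) (Hn : mono n)
  (Hg : factors_through n g1) (t : C) (g : hom t A3) :
  zero_mor (e2 ∘ g) -> zero_mor (e3 ∘ g) -> factors_through n g.
Proof.
  intros Hg2 Hg3.
  destruct Hx as [I [ex [mX [Rex [_ [Ex Nx]]]]]].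
  destruct Hg as [c Hc], HrX as [_ rX2], HsX as [_ sX2], Hu1 as [u11 u12],
    Hg1 as [g11 [g12 g13]], HA3 as [HA31 [_ HA3u]].
  destruct (zero_mor_exists (proj1 HC) I A) as [z Hz].
  destruct (HA3u I mX z z) as [JX [[JX1 [JX2 JX3]] _]]; [| reflexivity |].
  { apply zero_mor_unique; [| apply zero_mor_postcomp, Hz].
    exact (cokernel_image_zero HC (regular_epi_epi ex Rex) Ex HqX). }
  destruct (cokernel_zero_factors_image Ex Nx HqX (e1 ∘ g)) as [c0 Hc0].
  { rewrite comp_assoc, HA31, <- comp_assoc. apply zero_mor_postcomp, Hg2. }
  assert (Hgc : g = JX ∘ c0).
  { apply (limit3_ext HA3); rewrite comp_assoc.
    - rewrite JX1. symmetry. exact Hc0.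
    - rewrite JX2. apply zero_mor_unique; [exact Hg2 | apply zero_mor_precomp, Hz].
    - rewrite JX3. apply zero_mor_unique; [exact Hg3 | apply zero_mor_precomp, Hz]. }
  destruct (factors_through_of_regular_epi ex n JX (c ∘ (u1 ∘ iX2)) Rex Hn) as [d Hd].
  - rewrite comp_assoc, Hc. apply (limit3_ext HA3); rewrite !comp_assoc.
    + rewrite JX1, g11, <- Ex, <- (comp_assoc sX pi1 u1), u11, comp_id_r. exact sX2.
    + rewrite JX2, g12, <- (comp_assoc rX pi1 u1), u11, comp_id_r.
      apply zero_mor_unique; [exact rX2 | apply zero_mor_precomp, Hz].
    + rewrite JX3, g13, <- (comp_assoc sY pi2 u1), u12, <- !comp_assoc.
      apply zero_mor_unique; [| apply zero_mor_precomp, Hz].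
      apply zero_mor_postcomp, zero_mor_postcomp, rX2.
  - exists (d ∘ c0). rewrite comp_assoc, Hd. symmetry. exact Hgc.
Qed.

Lemma gamma1_covers_kernel_Y {M : C} (n : hom M A3) (Hn : mono n)
  (Hg : factors_through n g1) (t : C) (g : hom t A3) :
  zero_mor (e1 ∘ g) -> zero_mor (e2 ∘ g) -> factors_through n g.
Proof.
  intros Hg1' Hg2.
  destruct Hy as [I [ey [mY [Rey [_ [Ey Ny]]]]]].
  destruct Hg as [c Hc], HrY as [_ rY2], HsY as [_ sY2], Hu2 as [u21 u22],
    Hg1 as [g11 [g12 g13]], HA3 as [_ [HA32 HA3u]].
  destruct (zero_mor_exists (proj1 HC) I A) as [z Hz].
  destruct (HA3u I z z mY) as [JY [[JY1 [JY2 JY3]] _]]; [reflexivity | |].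
  { apply zero_mor_unique; [apply zero_mor_postcomp, Hz |].
    exact (cokernel_image_zero HC (regular_epi_epi ey Rey) Ey HqY). }
  destruct (cokernel_zero_factors_image Ey Ny HqY (e3 ∘ g)) as [c0 Hc0].
  { rewrite comp_assoc, <- HA32, <- comp_assoc. apply zero_mor_postcomp, Hg2. }
  assert (Hgc : g = JY ∘ c0).
  { apply (limit3_ext HA3); rewrite comp_assoc.
    - rewrite JY1. apply zero_mor_unique; [exact Hg1' | apply zero_mor_precomp, Hz].
    - rewrite JY2. apply zero_mor_unique; [exact Hg2 | apply zero_mor_precomp, Hz].
    - rewrite JY3. symmetry. exact Hc0. }
  destruct (factors_through_of_regular_epi ey n JY (c ∘ (u2 ∘ iY2)) Rey Hn) as [d Hd].
  - rewrite comp_assoc, Hc. apply (limit3_ext HA3); rewrite !comp_assoc.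
    + rewrite JY1, g11, <- (comp_assoc sX pi1 u2), u21, <- !comp_assoc.
      apply zero_mor_unique; [| apply zero_mor_precomp, Hz].
      apply zero_mor_postcomp, zero_mor_postcomp, rY2.
    + rewrite JY2, g12, <- (comp_assoc rX pi1 u2), u21, <- !comp_assoc.
      apply zero_mor_unique; [| apply zero_mor_precomp, Hz].
      apply zero_mor_postcomp, zero_mor_postcomp, rY2.
    + rewrite JY3, g13, <- Ey, <- (comp_assoc sY pi2 u2), u22, comp_id_r. exact sY2.
  - exists (d ∘ c0). rewrite comp_assoc, Hd. symmetry. exact Hgc.
Qed.

Lemma gamma1_extremal : extremal_epi g1.
Proof.
  intros M n Hn Hg. apply (limit3_cover_iso HC HA3 n Hn).
  - intros d d1 d2 d3. destruct Hg as [c Hc]. exists (c ∘ (u1 ∘ iX1)).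
    destruct HrX as [rX1 _], HsX as [sX1 _], HsY as [sY1 _], Hu1 as [u11 u12],
      Hg1 as [g11 [g12 g13]].
    rewrite comp_assoc, Hc. apply (limit3_ext HA3); rewrite comp_assoc.
    + rewrite d1, g11, <- comp_assoc, (comp_assoc pi1), u11, comp_id_l. exact sX1.
    + rewrite d2, g12, <- comp_assoc, (comp_assoc pi1), u11, comp_id_l. exact rX1.
    + rewrite d3, g13, <- comp_assoc, (comp_assoc pi2), u12, <- comp_assoc, rX1,
        comp_id_r. exact sY1.
  - exact (gamma1_covers_kernel_X n Hn Hg).
  - exact (gamma1_covers_kernel_Y n Hn Hg).
Qed.

Lemma pi2_zero_factors_u1 {t : C} (g : hom t P) :
  zero_mor (pi2 ∘ g) -> g = u1 ∘ (pi1 ∘ g).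
Proof.
  intros Hg. destruct Hu1 as [u11 u12].
  apply (pullback_ext HP); rewrite comp_assoc.
  - rewrite u11, comp_id_l. reflexivity.
  - rewrite u12, <- comp_assoc, (comp_assoc rX), (proj1 HP), <- comp_assoc.
    apply zero_mor_unique; [exact Hg |].
    apply zero_mor_postcomp, zero_mor_postcomp, Hg.
Qed.

Lemma multiplication_coequalizes_kernel_pair (m : hom P A)
  (Hm : internal_multiplication m) {E : C} (k1 k2 : hom E P)
  (Hk : is_pullback g1 g1 k1 k2) : m ∘ k1 = m ∘ k2.
Proof.
  destruct HC as [_ [[[_ HPB] _] _]].
  destruct gamma1_u2_factorization as [gY [_ [G1 [G2 DY]]]].
  destruct (HPB _ _ _ gY gY) as [EY [l1 [l2 HEY]]].
  assert (Hpi2 : gY ∘ (pi2 ∘ k1) = gY ∘ (pi2 ∘ k2)).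
  { apply (pullback_ext HKY); rewrite !comp_assoc.
    - rewrite G1, <- (proj1 HP), <- (proj1 (proj2 Hg1)), <- !comp_assoc, (proj1 Hk).
      reflexivity.
    - rewrite G2, <- (proj2 (proj2 Hg1)), <- !comp_assoc, (proj1 Hk). reflexivity. }
  destruct (proj2 HEY E _ _ Hpi2) as [f [[F1 F2] _]].
  destruct (proj2 Hk EY (u2 ∘ l1) (u2 ∘ l2)) as [sg [[S1 S2] _]].
  { rewrite !comp_assoc, <- DY, <- !comp_assoc, (proj1 HEY). reflexivity. }
  assert (Hfs : f ∘ sg = idm EY).
  { apply (pullback_ext HEY); rewrite comp_assoc, comp_id_r.
    - rewrite F1, <- comp_assoc, S1, comp_assoc, (proj2 Hu2), comp_id_l. reflexivity.
    - rewrite F2, <- comp_assoc, S2, comp_assoc, (proj2 Hu2), comp_id_l. reflexivity. }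
  apply (split_extension_jointly_epic HC f sg Hfs).
  - rewrite <- !comp_assoc, S1, S2, !comp_assoc, (proj2 Hm), <- G2, <- !comp_assoc,
      (proj1 HEY). reflexivity.
  - intros t g Hg.
    (* on the kernel of [f] both [k1 ∘ g] and [k2 ∘ g] land in the image of [u1],
       where [m] agrees with [e1 ∘ g1] *)
    assert (Hker : forall k : hom E P, zero_mor (pi2 ∘ (k ∘ g)) ->
               m ∘ (k ∘ g) = e1 ∘ (g1 ∘ (k ∘ g))).
    { intros k Hkg. rewrite (pi2_zero_factors_u1 _ Hkg), !comp_assoc, (proj1 Hm),
        (proj1 Hg1), <- (comp_assoc sX pi1 u1), (proj1 Hu1), comp_id_r. reflexivity. }
    rewrite <- !comp_assoc, (Hker k1), (Hker k2), (comp_assoc g1 k1), (proj1 Hk),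
      <- comp_assoc; [reflexivity | |].
    + rewrite comp_assoc, <- F2, <- comp_assoc. apply zero_mor_postcomp, Hg.
    + rewrite comp_assoc, <- F1, <- comp_assoc. apply zero_mor_postcomp, Hg.
Qed.

Lemma gamma1_correspondence :
  (forall m : hom P A, internal_multiplication m ->
     exists! p : hom A3 A, pregroupoid_structure p /\ p ∘ g1 = m) /\
  (forall p : hom A3 A, pregroupoid_structure p -> internal_multiplication (p ∘ g1)).
Proof.
  pose proof HC as [_ [HR _]]. pose proof HR as [[_ HPB] _].
  split.
  - intros m Hm.
    destruct (HPB _ _ _ g1 g1) as [E [k1 [k2 Hk]]].
    destruct (extremal_epi_coequalizer HR g1 k1 k2 gamma1_extremal Hk) as [_ Hcoeq].
    destruct (Hcoeq A m (multiplication_coequalizes_kernel_pair m Hm k1 k2 Hk)) as [p [Hp Hpu]].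
    exists p. split.
    + split; [apply pregroupoid_iff_multiplication; rewrite Hp |]; assumption.
    + intros p' [_ Hp']. exact (Hpu p' Hp').
  - intros p. apply pregroupoid_iff_multiplication.
Qed.

End Correspondence.

Theorem corollary1p9 (C : Category) (HC : homological (C := C))
  (HCol : has_finite_colimits (C := C))
  (A X Y : C) (x : hom X A) (y : hom Y A)
  (Hx : image_is_normal x) (Hy : image_is_normal y)
  (* coproducts A+X, A+Y *)
  (AX : C) (iX1 : hom A AX) (iX2 : hom X AX) (HAX : is_coproduct iX1 iX2)
  (AY : C) (iY1 : hom A AY) (iY2 : hom Y AY) (HAY : is_coproduct iY1 iY2)
  (* rX = [1,0] : A+X -> A,  rY = [1,0] : A+Y -> A *)
  (rX : hom AX A) (HrX : rX ∘ iX1 = idm A /\ zero_mor (rX ∘ iX2))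
  (rY : hom AY A) (HrY : rY ∘ iY1 = idm A /\ zero_mor (rY ∘ iY2))
  (* sX = [1,x],  sY = [1,y] *)
  (sX : hom AX A) (HsX : sX ∘ iX1 = idm A /\ sX ∘ iX2 = x)
  (sY : hom AY A) (HsY : sY ∘ iY1 = idm A /\ sY ∘ iY2 = y)
  (* P = (A+X) x_A (A+Y) *)
  (P : C) (pi1 : hom P AX) (pi2 : hom P AY) (HP : is_pullback rX rY pi1 pi2)
  (* u1 = <1, i1[1,0]>,  u2 = <i1[1,0], 1> *)
  (u1 : hom AX P) (Hu1 : pi1 ∘ u1 = idm AX /\ pi2 ∘ u1 = iY1 ∘ rX)
  (u2 : hom AY P) (Hu2 : pi1 ∘ u2 = iX1 ∘ rY /\ pi2 ∘ u2 = idm AY)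
  (* cokernels A -> A/X, A -> A/Y *)
  (QX : C) (qX : hom A QX) (HqX : is_cokernel x qX)
  (QY : C) (qY : hom A QY) (HqY : is_cokernel y qY)
  (* A3 = A x_{A/X} A x_{A/Y} A *)
  (A3 : C) (e1 e2 e3 : hom A3 A) (HA3 : is_limit3 qX qY e1 e2 e3)
  (* kernel pairs A x_{A/X} A and A x_{A/Y} A *)
  (KX : C) (kX1 kX2 : hom KX A) (HKX : is_pullback qX qX kX1 kX2)
  (KY : C) (kY1 kY2 : hom KY A) (HKY : is_pullback qY qY kY1 kY2)
  (* dX = <pi1,pi2,pi2> on KX,  dY = <pi1,pi1,pi2> on KY *)
  (dX : hom KX A3) (HdX : e1 ∘ dX = kX1 /\ e2 ∘ dX = kX2 /\ e3 ∘ dX = kX2)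
  (dY : hom KY A3) (HdY : e1 ∘ dY = kY1 /\ e2 ∘ dY = kY1 /\ e3 ∘ dY = kY2)
  (* gamma1 = <[1,x]pi1, [1,0]pi1, [1,y]pi2> *)
  (g1 : hom P A3)
  (Hg1 : e1 ∘ g1 = sX ∘ pi1 /\ e2 ∘ g1 = rX ∘ pi1 /\ e3 ∘ g1 = sY ∘ pi2) :
  let is_mult := fun m : hom P A => m ∘ u1 = sX /\ m ∘ u2 = sY in
  let is_preg := fun p : hom A3 A => p ∘ dX = kX1 /\ p ∘ dY = kY2 in
  ((exists m, is_mult m) <-> (exists p, is_preg p)) /\
  (forall m, is_mult m -> exists! p, is_preg p /\ p ∘ g1 = m) /\
  (forall p, is_preg p -> is_mult (p ∘ g1)).
Proof.
  destruct (gamma1_correspondence HC Hx Hy HAX HAY HrX HrY HsX HsY HP Hu1 Hu2 HqX HqY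
              HA3 HKX HKY HdX HdY Hg1) as [Hmult Hpreg].
  cbv zeta. split; [split | split; [exact Hmult | exact Hpreg]].
  - intros [m Hm]. destruct (Hmult m Hm) as [p [[Hp _] _]]. exists p; exact Hp.
  - intros [p Hp]. exists (p ∘ g1). exact (Hpreg p Hp).
Qed.
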